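(* Let $S$ be a finite set, $G$ a finite group and $f:S\to G$ a function. Let $\{\rho\}$ be a complete set of representatives of the equivalence classes of irreducible unitary representations $\rho: G\to U(V_\rho)$, and for each $\rho$ let $P_\rho$ be an orthogonal projector on $V_\rho$, with at least one $P_\rho\neq 0$. Let $\phi=\sum_\rho c_\rho\,\rho^\dagger(P_\rho)\in\mathbb{C}[G]$ with all $c_\rho\in\mathbb{C}$ nonzero. Let $u_S=|S|^{-1/2}\sum_{s\in S}|s\rangle$, let $U_f$ be the unitary on $\mathbb{C}[S]\otimes\mathbb{C}[G]$ with $U_f(|s\rangle\otimes|g\rangle)=|s\rangle\otimes|f(s)g\rangle$, and let $\psi=U_f(u_S\otimes\phi)$. (a) If $f$ is $P_\rho$-constant, then $\psi=u_S\otimes\chi$ for some nonzero $\chi\in\mathbb{C}[G]$; in particular a projective measurement of the first factor onto the span of $u_S$ succeeds with probability 1. (b) If $f$ is $P_\rho$-balanced, then $(\langle u_S|\otimes\mathrm{id})\psi=0$; in particular that measurement succeeds with probability 0.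
   Context: For a finite set $X$, $\mathbb{C}[X]$ is the Hilbert space with orthonormal basis $\{|x\rangle: x\in X\}$; $\mathbb{C}[G]$ is also the group algebra. Each $\rho$ is extended linearly to $\rho:\mathbb{C}[G]\to\mathrm{End}(V_\rho)$, where $\mathrm{End}(V_\rho)$ carries the Hilbert–Schmidt inner product, and $\rho^\dagger(M)=\sum_{h\in G}\mathrm{Tr}(\rho(h)^\dagger M)|h\rangle$ is its adjoint. Definitions: $f$ is $P_\rho$-balanced if $\sum_{s\in S}\rho(f(s))P_\rho=0$ for every $\rho$; $f$ is $P_\rho$-constant if for every $\rho$ there is $x_\rho\in\mathrm{End}(V_\rho)$ with $\rho(f(s))P_\rho=x_\rho$ for all $s\in S$. (For $G=\mathbb{Z}_2$, $P_{\text{trivial}}=0$ and $P_{\text{sign}}=\mathrm{id}$ this recovers the usual constant/balanced functions and the Deutsch–Jozsa algorithm.) *)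

From HB Require Import structures.
From mathcomp Require Import all_boot all_order all_algebra all_fingroup all_solvable all_field all_character.
Set Implicit Arguments. Unset Strict Implicit. Unset Printing Implicit Defensive.
Import Order.TTheory GRing.Theory Num.Theory.
Local Open Scope ring_scope.

(* C[X] : the Hilbert space with orthonormal basis |x>, x in X *)
Notation Cvec X := {ffun X -> algC}.

Definition ket (X : finType) (x : X) : Cvec X := [ffun y => (y == x)%:R].

Definition adjmx m n (A : 'M[algC]_(m, n)) : 'M[algC]_(n, m) := (map_mx Num.conj A)^T.

Definition unitary_repr (gT : finGroupType) n
  (r : mx_representation algC [set: gT]%G n) : Prop :=
  forall g : gT, adjmx (r g) *m r g = 1%:M.

Definition orth_proj n (P : 'M[algC]_n) : Prop := P *m P = P /\ adjmx P = P.

(* rho^dagger(M) = sum_h Tr(rho(h)^dagger M) |h>, i.e. coefficient at h *)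
Definition rho_dag (gT : finGroupType) n (r : mx_representation algC [set: gT]%G n)
  (M : 'M[algC]_n) : Cvec gT := [ffun h => \tr (adjmx (r h) *m M)].

Definition uS (S : finType) : Cvec S := [ffun s => (sqrtC (#|S|%:R))^-1 * \sum_(t : S) ket t s].

(* tensor product u (x) v in C[S] (x) C[G] = C[S * G] *)
Definition tens (S T : finType) (u : Cvec S) (v : Cvec T) : Cvec (S * T)%type :=
  [ffun p => u p.1 * v p.2].

(* U_f (coordinatewise), the linear extension of |s>|g> |-> |s>|f(s) g> *)
Definition Uf (S : finType) (gT : finGroupType) (f : S -> gT)
  (w : Cvec (S * gT)%type) : Cvec (S * gT)%type :=
  [ffun q => \sum_(p : S * gT) w p * ket (p.1, f p.1 * p.2)%g q].

Definition partial_bra (S T : finType) (u : Cvec S) (w : Cvec (S * T)%type) : Cvec T :=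
  [ffun t => \sum_(s : S) Num.conj (u s) * w (s, t)].

Definition P_balanced (S : finType) (gT : finGroupType) (I : finType) (n : I -> nat)
  (rho : forall i, mx_representation algC [set: gT]%G (n i))
  (P : forall i, 'M[algC]_(n i)) (f : S -> gT) : Prop :=
  forall i, \sum_(s : S) rho i (f s) *m P i = 0.

Definition P_constant (S : finType) (gT : finGroupType) (I : finType) (n : I -> nat)
  (rho : forall i, mx_representation algC [set: gT]%G (n i))
  (P : forall i, 'M[algC]_(n i)) (f : S -> gT) : Prop :=
  forall i, exists x : 'M[algC]_(n i), forall s, rho i (f s) *m P i = x.

From HB Require Import structures.
From mathcomp Require Import all_boot all_order all_algebra all_fingroup all_solvable all_field all_character.
Import Order.TTheory GRing.Theory Num.Theory.
Local Open Scope ring_scope.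
Set Implicit Arguments. Unset Strict Implicit. Unset Printing Implicit Defensive.

(* For unitary rho, rho^dagger(M)(g) = Tr(rho(g^-1) M), so the state phi is a
   sum of "matrix coefficient" functions  g |-> sum_i Tr(rho_i(g^-1) M_i)  with
   M_i = c_i P_i.  Applying U_f to u_S (x) phi translates the G-argument by
   f(s)^-1, which replaces each M_i by rho_i(f(s)) M_i; hence
       psi(s, g) = u_S(s) * coef(i |-> c_i rho_i(f s) P_i)(g).
   (a) If f is P_rho-constant, the family rho_i(f s) P_i does not depend on s,
       so psi = u_S (x) chi; chi is nonzero because, by the Schur orthogonality
       relations, the Fourier coefficient  sum_g coef(M)(g) rho_j(g)  equals
       (|G|/n_j) M_j, so a nonzero family gives a nonzero coefficient function.
   (b) If f is P_rho-balanced, (<u_S| (x) id) psi is a multiple of the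
       coefficient function of the family c_i sum_s rho_i(f s) P_i = 0.
   The file first proves Schur's lemma and the orthogonality relations via the
   averaging ("twirling") operator, then develops coefficient functions, and
   finally computes the states of the algorithm. *)

Lemma mul_delta_entry (R : pzSemiRingType) m p q s
    (A : 'M[R]_(m, p)) (B : 'M[R]_(q, s)) a b k l :
  (A *m delta_mx b k *m B) a l = A a b * B k l.
Proof.
by rewrite -(mul_delta_mx (0 : 'I_1)) mulmxA -colE -mulmxA -rowE mxE big_ord1 !mxE.
Qed.

Lemma mxtrace_delta (R : pzSemiRingType) n (b k : 'I_n) :
  \tr (delta_mx b k : 'M[R]_n) = (b == k)%:R.
Proof.
rewrite /mxtrace (bigD1 b) //= big1 ?addr0; first by rewrite mxE eqxx.
by move=> j /negbTE nj; rewrite mxE nj.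
Qed.

(* The twirl of M averages M over G with respect to two representations; it is
   the standard way to produce intertwiners. *)
Section Twirl.

Variables (gT : finGroupType) (n1 n2 : nat).
Variables (r1 : mx_representation algC [set: gT]%G n1)
          (r2 : mx_representation algC [set: gT]%G n2).

Definition twirl (M : 'M[algC]_(n2, n1)) : 'M[algC]_(n2, n1) :=
  \sum_(g : gT) r2 g *m M *m r1 (g^-1)%g.

Lemma twirl_hom M h : r2 h *m twirl M = twirl M *m r1 h.
Proof.
rewrite /twirl mulmx_sumr mulmx_suml [RHS](reindex_inj (mulgI h)) /=.
apply: eq_bigr => g _.
rewrite !mulmxA -repr_mxM ?inE // -!mulmxA -repr_mxM ?inE //.
by rewrite invMg -mulgA mulVg mulg1.
Qed.

Lemma fourier_coef_twirl (Q : 'M_n1) a b :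
  (\sum_(g : gT) \tr (r1 (g^-1)%g *m Q) *: r2 g) a b
    = \sum_(k < n1) (twirl (delta_mx b k) *m Q) a k.
Proof.
rewrite summxE.
under [RHS]eq_bigr => k _ do rewrite /twirl mulmx_suml summxE.
rewrite exchange_big /=; apply: eq_bigr => g _.
rewrite mxE /mxtrace mulr_suml; apply: eq_bigr => k _.
by rewrite -(mulmxA (r2 g *m delta_mx b k)) mul_delta_entry mulrC.
Qed.

End Twirl.

Lemma intertwiner_rsim (gT : finGroupType) n1 n2
    (r1 : mx_representation algC [set: gT]%G n1)
    (r2 : mx_representation algC [set: gT]%G n2) (T : 'M[algC]_(n2, n1)) :
  mx_irreducible r1 -> mx_irreducible r2 ->
  (forall h, r2 h *m T = T *m r1 h) -> T != 0 -> mx_rsim r2 r1.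
Proof.
move=> /mx_irrP [_ irr1] /mx_irrP [_ irr2] homT nzT.
have modK : mxmodule r2 (kermx T).
  apply/mxmoduleP => x _; apply/sub_kermxP.
  by rewrite -mulmxA homT mulmxA mulmx_ker mul0mx.
have freeT : row_free T.
  rewrite -kermx_eq0; apply: contraNT nzT => nzK.
  have := irr2 _ modK nzK; rewrite -sub1mx => /sub_kermxP.
  by rewrite mul1mx => ->.
have modT : mxmodule r1 T by apply/mxmoduleP => x _; rewrite -homT submxMl.
have fullT : row_full T.
  have := irr1 <<T>>%MS; rewrite (eqmx_module _ (genmxE T)) (eqmx_eq0 (genmxE T)).
  by rewrite /row_full genmxE => /(_ modT nzT).
have n21 : n2 = n1 by rewrite -(eqP freeT) (eqP fullT).
by exists T => // x _; rewrite homT.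
Qed.

Section SchurOrthogonality.

Variable gT : finGroupType.

Lemma twirl_eq0 n1 n2 (r1 : mx_representation algC [set: gT]%G n1)
    (r2 : mx_representation algC [set: gT]%G n2) M :
  mx_irreducible r1 -> mx_irreducible r2 -> ~ mx_rsim r2 r1 -> twirl r1 r2 M = 0.
Proof.
move=> irr1 irr2 nsim; have [//|nzT] := eqVneq (twirl r1 r2 M) 0.
by case: nsim; apply: intertwiner_rsim nzT => // h; apply: twirl_hom.
Qed.

(* Over the algebraically closed field algC, the twirl of an irreducible
   representation with itself is the scalar (|G| Tr M / n). *)
Lemma twirl_scalar n (r : mx_representation algC [set: gT]%G n) M :
  mx_irreducible r -> twirl r r M = ((\tr M *+ #|gT|) / n%:R)%:M.
Proof.
move=> irr; have n_gt0 : (0 < n)%N by case/mx_irrP: irr.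
have cT : centgmx r (twirl r r M) by apply/centgmxP => x _; rewrite twirl_hom.
have /is_scalar_mxP [a ea] :=
  mx_abs_irr_cent_scalar (group_closure_closed_field irr) cT.
have tr_twirl : \tr (twirl r r M) = \tr M *+ #|gT|.
  rewrite /twirl raddf_sum /= -sumr_const; apply: eq_bigr => g _.
  by rewrite mxtrace_mulC mulmxA -repr_mxM ?inE // mulVg repr_mx1 mul1mx.
rewrite ea; congr (_%:M); move: tr_twirl; rewrite ea mxtrace_scalar => <-.
by rewrite -[a *+ n]mulr_natr mulfK // pnatr_eq0 -lt0n.
Qed.

Lemma schur_orth_ne n1 n2 (r1 : mx_representation algC [set: gT]%G n1)
    (r2 : mx_representation algC [set: gT]%G n2) (Q : 'M_n1) :
  mx_irreducible r1 -> mx_irreducible r2 -> ~ mx_rsim r2 r1 ->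
  \sum_(g : gT) \tr (r1 (g^-1)%g *m Q) *: r2 g = 0.
Proof.
move=> irr1 irr2 nsim; apply/matrixP => a b.
rewrite fourier_coef_twirl mxE big1 // => k _.
by rewrite twirl_eq0 // mul0mx mxE.
Qed.

Lemma schur_orth_eq n (r : mx_representation algC [set: gT]%G n) (Q : 'M_n) :
  mx_irreducible r ->
  \sum_(g : gT) \tr (r (g^-1)%g *m Q) *: r g = (#|gT|%:R / n%:R) *: Q.
Proof.
move=> irr; apply/matrixP => a b.
rewrite fourier_coef_twirl mxE (bigD1 b) //= big1 ?addr0 => [|k nkb].
  by rewrite twirl_scalar // mul_scalar_mx mxE mxtrace_delta eqxx mulr1n.
rewrite twirl_scalar // mul_scalar_mx mxE mxtrace_delta eq_sym (negbTE nkb).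
by rewrite mulr0n mul0rn !mul0r.
Qed.

End SchurOrthogonality.

Section CoefficientFunctions.

Variables (gT : finGroupType) (I : finType) (n : I -> nat).
Variable rho : forall i, mx_representation algC [set: gT]%G (n i).

Definition mx_coefs (M : forall i, 'M[algC]_(n i)) : Cvec gT :=
  [ffun g => \sum_(i : I) \tr (rho i (g^-1)%g *m M i)].

Lemma eq_mx_coefs (M M' : forall i, 'M[algC]_(n i)) :
  (forall i, M i = M' i) -> mx_coefs M = mx_coefs M'.
Proof. by move=> eqM; apply/ffunP => g; rewrite !ffunE; under eq_bigr do rewrite eqM. Qed.

Lemma mx_coefs0 g : mx_coefs (fun i => 0) g = 0.
Proof. by rewrite ffunE big1 // => i _; rewrite mulmx0 mxtrace0. Qed.

Lemma mx_coefs_sum (T : finType) (M : T -> forall i, 'M[algC]_(n i)) g :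
  \sum_(t : T) mx_coefs (M t) g = mx_coefs (fun i => \sum_(t : T) M t i) g.
Proof.
rewrite ffunE; under eq_bigr do rewrite ffunE.
rewrite exchange_big; apply: eq_bigr => i _.
by rewrite mulmx_sumr raddf_sum.
Qed.

Lemma mx_coefs_translate (M : forall i, 'M[algC]_(n i)) y g :
  mx_coefs M (y^-1 * g)%g = mx_coefs (fun i => rho i y *m M i) g.
Proof.
rewrite !ffunE; apply: eq_bigr => i _.
by rewrite invMg invgK repr_mxM ?inE // mulmxA.
Qed.

Hypothesis rho_irr : forall i, mx_irreducible (rho i).
Hypothesis rho_ineq : forall i j, mx_rsim (rho i) (rho j) -> i = j.

Lemma mx_coefs_fourier (M : forall i, 'M[algC]_(n i)) j :
  \sum_(g : gT) mx_coefs M g *: rho j g = (#|gT|%:R / (n j)%:R) *: M j.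
Proof.
under eq_bigr do rewrite ffunE scaler_suml.
rewrite exchange_big (bigD1 j) //= schur_orth_eq // big1 ?addr0 // => i nij.
by apply: schur_orth_ne => // /rho_ineq eji; rewrite eji eqxx in nij.
Qed.

Lemma mx_coefs_neq0 (M : forall i, 'M[algC]_(n i)) j :
  M j != 0 -> mx_coefs M != 0.
Proof.
move=> nzM; apply/eqP => coefs0; move: nzM; apply/negP; rewrite negbK.
have := mx_coefs_fourier M j; rewrite coefs0.
rewrite big1 => [/esym/eqP|g _]; last by rewrite ffunE scale0r.
have nG : #|gT| != 0%N by rewrite -lt0n; apply/card_gt0P; exists 1%g.
have nj : n j != 0%N by rewrite -lt0n; case/mx_irrP: (rho_irr j).
by rewrite scaler_eq0 mulf_eq0 invr_eq0 !pnatr_eq0 (negbTE nG) (negbTE nj).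
Qed.

End CoefficientFunctions.

(* For a unitary representation the adjoint is the inverse, so rho^dagger(M)
   is the coefficient function of the one-member family M. *)
Lemma unitary_adj (gT : finGroupType) n (r : mx_representation algC [set: gT]%G n) g :
  unitary_repr r -> adjmx (r g) = r (g^-1)%g.
Proof.
move=> ru; have [_ unit_rg] := mulmx1_unit (ru g).
by rewrite repr_mxV ?inE // -[adjmx _]mulmx1 -(mulmxV unit_rg) mulmxA ru mul1mx.
Qed.

Lemma rho_dagE (gT : finGroupType) n (r : mx_representation algC [set: gT]%G n) M g :
  unitary_repr r -> rho_dag r M g = \tr (r (g^-1)%g *m M).
Proof. by move=> ru; rewrite ffunE unitary_adj. Qed.

Lemma Uf_E (S : finType) (gT : finGroupType) (f : S -> gT) w s g :
  Uf f w (s, g) = w (s, ((f s)^-1 * g)%g).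
Proof.
rewrite ffunE (bigD1 (s, ((f s)^-1 * g)%g)) //= big1 ?addr0.
  by rewrite ffunE mulKVg eqxx mulr1.
move=> [s' g'] /= ne; rewrite ffunE.
case: eqP => [[e1 e2]|]; last by rewrite mulr0.
by move: ne; rewrite e2 -e1 mulKg eqxx.
Qed.

Lemma uS_E (S : finType) s : uS S s = (sqrtC #|S|%:R)^-1.
Proof.
rewrite ffunE (bigD1 s) //= big1 ?addr0; first by rewrite ffunE eqxx mulr1.
by move=> t /negbTE nt; rewrite ffunE eq_sym nt.
Qed.

Unset Implicit Arguments.
Theorem mainTheorem7 (S : finType) (gT : finGroupType) (f : S -> gT)
  (I : finType) (n : I -> nat)
  (rho : forall i, mx_representation algC [set: gT]%G (n i))
  (rho_irr : forall i, mx_irreducible (rho i))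
  (rho_unit : forall i, unitary_repr (rho i))
  (rho_ineq : forall i j, mx_rsim (rho i) (rho j) -> i = j)
  (rho_compl : forall m (r : mx_representation algC [set: gT]%G m),
      mx_irreducible r -> unitary_repr r -> exists i, mx_rsim r (rho i))
  (P : forall i, 'M[algC]_(n i))
  (P_proj : forall i, orth_proj (P i))
  (P_nz : exists i, P i != 0)
  (c : I -> algC) (c_nz : forall i, c i != 0)
  (S_nonempty : (0 < #|S|)%N) :
  let phi : Cvec gT := [ffun g => \sum_(i : I) c i * rho_dag (rho i) (P i) g] in
  let psi : Cvec (S * gT)%type := Uf f (tens (uS S) phi) in
  (P_constant rho P f -> exists chi : Cvec gT, chi != 0 /\ psi = tens (uS S) chi) /\
  (P_balanced rho P f -> partial_bra (uS S) psi = 0).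
Proof.
move=> phi psi.
pose M s i := rho i (f s) *m (c i *: P i).
have phiE : phi = mx_coefs rho (fun i => c i *: P i).
  apply/ffunP => g; rewrite !ffunE; apply: eq_bigr => i _.
  by rewrite rho_dagE // -scalemxAr mxtraceZ.
have psiE s g : psi (s, g) = uS S s * mx_coefs rho (M s) g.
  by rewrite Uf_E ffunE phiE mx_coefs_translate.
split=> [constP | balP].
  have [s0 _] := card_gt0P S_nonempty; have [j nzPj] := P_nz.
  exists (mx_coefs rho (M s0)); split.
    apply: (mx_coefs_neq0 rho_irr rho_ineq (j := j)).
    rewrite /M -scalemxAr scaler_eq0 (negbTE (c_nz j)) /=.
    apply: contra nzPj => /eqP rP0.
    by rewrite -(mulKmx (repr_mx_unit (rho j) (in_setT (f s0))) (P j)) rP0 mulmx0.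
  apply/ffunP => -[s g]; rewrite psiE [RHS]ffunE /= (@eq_mx_coefs _ _ _ _ (M s) (M s0)) //.
  by move=> i; rewrite /M -!scalemxAr; have [x rPx] := constP i; rewrite !rPx.
apply/ffunP => t; rewrite !ffunE.
under eq_bigr do rewrite psiE !uS_E mulrA.
rewrite -mulr_sumr mx_coefs_sum (@eq_mx_coefs _ _ _ rho _ (fun i => 0)).
  by rewrite mx_coefs0 mulr0.
move=> i; under eq_bigr do rewrite /M -scalemxAr.
by rewrite -scaler_sumr balP scaler0.
Qed.
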